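(* Let $(\mathcal{A},\succ_{\mathcal{A}},\prec_{\mathcal{A}})$ be a finite-dimensional antidendriform algebra with associated antiassociative algebra $(\mathcal{A},\ast_{\mathcal{A}})$, and let $(\succ_{\mathcal{A}^*},\prec_{\mathcal{A}^*})$ be an antidendriform structure on $\mathcal{A}^*$ with associated antiassociative algebra $(\mathcal{A}^*,\ast_{\mathcal{A}^*})$. Then $(\mathcal{A},\mathcal{A}^*,R^*_{\prec_{\mathcal{A}}},L^*_{\succ_{\mathcal{A}}},R^*_{\prec_{\mathcal{A}^*}},L^*_{\succ_{\mathcal{A}^*}})$ is a matched pair of antiassociative algebras if and only if $$(\mathcal{A},\mathcal{A}^*,\,R^*_{\succ_{\mathcal{A}}}+R^*_{\prec_{\mathcal{A}}},\,-L^*_{\prec_{\mathcal{A}}},\,-R^*_{\succ_{\mathcal{A}}},\,L^*_{\succ_{\mathcal{A}}}+L^*_{\prec_{\mathcal{A}}},\,R^*_{\succ_{\mathcal{A}^*}}+R^*_{\prec_{\mathcal{A}^*}},\,-L^*_{\prec_{\mathcal{A}^*}},\,-R^*_{\succ_{\mathcal{A}^*}},\,L^*_{\succ_{\mathcal{A}^*}}+L^*_{\prec_{\mathcal{A}^*}})$$ is a matched pair of antidendriform algebras.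
   Context: An antiassociative algebra is a vector space with bilinear product satisfying $(x\cdot y)\cdot z=-x\cdot(y\cdot z)$. An antidendriform algebra is a vector space with bilinear products $\prec,\succ$ such that, with $x\ast y=x\prec y+x\succ y$: $(x\prec y)\prec z=-x\prec(y\ast z)$, $(x\succ y)\prec z=-x\succ(y\prec z)$, $x\succ(y\succ z)=-(x\ast y)\succ z$. For $\mathcal{A}$ finite-dimensional (identifying $\mathcal{A}^{**}=\mathcal{A}$) and $\diamond\in\{\succ,\prec\}$, the maps $L^*_{\diamond_{\mathcal{A}}},R^*_{\diamond_{\mathcal{A}}}:\mathcal{A}\to gl(\mathcal{A}^* )$ and $L^*_{\diamond_{\mathcal{A}^*}},R^*_{\diamond_{\mathcal{A}^*}}:\mathcal{A}^*\to gl(\mathcal{A})$ are $\langle L^*_{\diamond_{\mathcal{A}}}(x)a^*,y\rangle=\langle x\diamond_{\mathcal{A}}y,a^*\rangle$, $\langle R^*_{\diamond_{\mathcal{A}}}(x)a^*,y\rangle=\langle y\diamond_{\mathcal{A}}x,a^*\rangle$, $\langle L^*_{\diamond_{\mathcal{A}^*}}(a^* )x,b^*\rangle=\langle a^*\diamond_{\mathcal{A}^*}b^*,x\rangle$, $\langle R^*_{\diamond_{\mathcal{A}^*}}(a^* )x,b^*\rangle=\langle b^*\diamond_{\mathcal{A}^*}a^*,x\rangle$. A bimodule of an antiassociative algebra $\mathcal{A}$ is $(l,r,V)$ with $l(xy)=-l(x)l(y)$, $r(xy)=-r(y)r(x)$, $l(x)r(y)=-r(y)l(x)$. A matched pair of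 antiassociative algebras $(\mathcal{A},\cdot),(\mathcal{B},\circ)$ is $(\mathcal{A},\mathcal{B},l_{\mathcal{A}},r_{\mathcal{A}},l_{\mathcal{B}},r_{\mathcal{B}})$ with $(l_{\mathcal{A}},r_{\mathcal{A}},\mathcal{B})$ a bimodule of $\mathcal{A}$, $(l_{\mathcal{B}},r_{\mathcal{B}},\mathcal{A})$ a bimodule of $\mathcal{B}$, and for all $x,y\in\mathcal{A},a,b\in\mathcal{B}$: $l_{\mathcal{A}}(x)(a\circ b)=-l_{\mathcal{A}}(r_{\mathcal{B}}(a)x)b-(l_{\mathcal{A}}(x)a)\circ b$; $r_{\mathcal{A}}(x)(a\circ b)=-r_{\mathcal{A}}(l_{\mathcal{B}}(b)x)a-a\circ(r_{\mathcal{A}}(x)b)$; $l_{\mathcal{B}}(a)(x\cdot y)=-l_{\mathcal{B}}(r_{\mathcal{A}}(x)a)y-(l_{\mathcal{B}}(a)x)\cdot y$; $r_{\mathcal{B}}(a)(x\cdot y)=-r_{\mathcal{B}}(l_{\mathcal{A}}(y)a)x-x\cdot(r_{\mathcal{B}}(a)y)$; $l_{\mathcal{A}}(l_{\mathcal{B}}(a)x)b+(r_{\mathcal{A}}(x)a)\circ b+r_{\mathcal{A}}(r_{\mathcal{B}}(b)x)a+a\circ(l_{\mathcal{A}}(x)b)=0$; $l_{\mathcal{B}}(l_{\mathcal{A}}(x)a)y+(r_{\mathcal{B}}(a)x)\cdot y+r_{\mathcal{B}}(r_{\mathcal{A}}(y)a)x+x\cdot(l_{\mathcal{B}}(a)y)=0$.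 A bimodule of an antidendriform algebra $(\mathcal{A},\succ,\prec)$ is a tuple $(l_\succ,r_\succ,l_\prec,r_\prec,V)$ of linear maps $\mathcal{A}\to gl(V)$ such that $\mathcal{A}\oplus V$ with $(x+u)\succ(y+v)=x\succ y+l_\succ(x)v+r_\succ(y)u$, $(x+u)\prec(y+v)=x\prec y+l_\prec(x)v+r_\prec(y)u$ is antidendriform. A matched pair of antidendriform algebras $\mathcal{A},\mathcal{B}$ is a tuple $(\mathcal{A},\mathcal{B},l_{\succ_{\mathcal{A}}},r_{\succ_{\mathcal{A}}},l_{\prec_{\mathcal{A}}},r_{\prec_{\mathcal{A}}},l_{\succ_{\mathcal{B}}},r_{\succ_{\mathcal{B}}},l_{\prec_{\mathcal{B}}},r_{\prec_{\mathcal{B}}})$ with the first quadruple a bimodule of $\mathcal{A}$ on $\mathcal{B}$ and the second a bimodule of $\mathcal{B}$ on $\mathcal{A}$, such that $\mathcal{A}\oplus\mathcal{B}$ with $(x+a)\succ(y+b)=(x\succ_{\mathcal{A}}y+r_{\succ_{\mathcal{B}}}(b)x+l_{\succ_{\mathcal{B}}}(a)y)+(l_{\succ_{\mathcal{A}}}(x)b+r_{\succ_{\mathcal{A}}}(y)a+a\succ_{\mathcal{B}}b)$ and $(x+a)\prec(y+b)=(x\prec_{\mathcal{A}}y+r_{\prec_{\mathcal{B}}}(b)x+l_{\prec_{\mathcal{B}}}(a)y)+(l_{\prec_{\mathcal{A}}}(x)b+r_{\prec_{\mathcal{A}}}(y)a+a\prec_{\mathcal{B}}b)$ is an antidendriform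 algebra. *)

From HB Require Import structures.
From mathcomp Require Import all_boot all_order all_algebra.
Set Implicit Arguments. Unset Strict Implicit. Unset Printing Implicit Defensive.
Import GRing.Theory.
Local Open Scope ring_scope.

Section Defs.
Variable K : fieldType.

Definition lin_map (U W : lmodType K) (g : U -> W) :=
  forall (a : K) (u v : U), g (a *: u + v) = a *: g u + g v.

Definition bilin (U V W : lmodType K) (f : U -> V -> W) :=
  (forall x, lin_map (f x)) /\ (forall y, lin_map (fun x => f x y)).

(* a linear map A -> gl(V), curried *)
Definition rep (A V : lmodType K) (l : A -> V -> V) := bilin l.

Definition antiassoc (A : lmodType K) (mul : A -> A -> A) :=
  bilin mul /\ forall x y z, mul (mul x y) z = - mul x (mul y z).

Definition antidend (A : lmodType K) (succ prec : A -> A -> A) :=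
  bilin succ /\ bilin prec /\
  let star x y := succ x y + prec x y in
  forall x y z,
    [/\ prec (prec x y) z = - prec x (star y z),
        prec (succ x y) z = - succ x (prec y z) &
        succ x (succ y z) = - succ (star x y) z].

Definition dstar (A : lmodType K) (succ prec : A -> A -> A) :=
  fun x y => prec x y + succ x y.

Definition aa_bimodule (A V : lmodType K) (mul : A -> A -> A)
    (l r : A -> V -> V) :=
  rep l /\ rep r /\
  forall x y v,
    [/\ l (mul x y) v = - l x (l y v),
        r (mul x y) v = - r y (r x v) &
        l x (r y v) = - r y (l x v)].

Definition aa_matched_pair (A B : lmodType K)
    (mulA : A -> A -> A) (mulB : B -> B -> B)
    (lA rA : A -> B -> B) (lB rB : B -> A -> A) :=
  aa_bimodule mulA lA rA /\ aa_bimodule mulB lB rB /\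
  forall (x y : A) (a b : B),
    [/\ lA x (mulB a b) = - lA (rB a x) b - mulB (lA x a) b,
        rA x (mulB a b) = - rA (lB b x) a - mulB a (rA x b),
        lB a (mulA x y) = - lB (rA x a) y - mulA (lB a x) y &
        rB a (mulA x y) = - rB (lA y a) x - mulA x (rB a y)] /\
    lA (lB a x) b + mulB (rA x a) b + rA (rB b x) a + mulB a (lA x b) = 0 /\
    lB (lA x a) y + mulA (rB a x) y + rB (rA y a) x + mulA x (lB a y) = 0.

Definition sum_op (A B : lmodType K) (opA : A -> A -> A) (opB : B -> B -> B)
    (lA rA : A -> B -> B) (lB rB : B -> A -> A) : A * B -> A * B -> A * B :=
  fun p q => (opA p.1 q.1 + rB q.2 p.1 + lB p.2 q.1,
              lA p.1 q.2 + rA q.1 p.2 + opB p.2 q.2).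

(* bimodule (l_succ, r_succ, l_prec, r_prec, V) of an antidendriform algebra:
   A (+) V with the semidirect products is antidendriform *)
Definition ad_bimodule (A V : lmodType K) (succ prec : A -> A -> A)
    (ls rs lp rp : A -> V -> V) :=
  [/\ rep ls, rep rs, rep lp, rep rp &
  antidend
    (sum_op succ (fun _ _ : V => 0) ls rs (fun _ _ => 0) (fun _ _ => 0))
    (sum_op prec (fun _ _ : V => 0) lp rp (fun _ _ => 0) (fun _ _ => 0))].

Definition ad_matched_pair (A B : lmodType K)
    (sA pA : A -> A -> A) (sB pB : B -> B -> B)
    (lsA rsA lpA rpA : A -> B -> B) (lsB rsB lpB rpB : B -> A -> A) :=
  [/\ ad_bimodule sA pA lsA rsA lpA rpA,
      ad_bimodule sB pB lsB rsB lpB rpB &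
      antidend (sum_op sA sB lsA rsA lsB rsB) (sum_op pA pB lpA rpA lpB rpB)].

(* Finite-dimensional A = 'rV[K]_n, its dual = 'cV[K]_n,
   pairing <x,a> = (x *m a) 0 0, so the double dual is A. *)
Definition pairing (n : nat) (x : 'rV[K]_n) (a : 'cV[K]_n) : K := (x *m a) 0 0.

(* <L^dual(x) a, y> = <x op y, a> *)
Definition LdA n (op : 'rV[K]_n -> 'rV[K]_n -> 'rV[K]_n) (x : 'rV[K]_n)
    (a : 'cV[K]_n) : 'cV[K]_n :=
  \col_j pairing (op x (delta_mx 0 j)) a.
(* <R^dual(x) a, y> = <y op x, a> *)
Definition RdA n (op : 'rV[K]_n -> 'rV[K]_n -> 'rV[K]_n) (x : 'rV[K]_n)
    (a : 'cV[K]_n) : 'cV[K]_n :=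
  \col_j pairing (op (delta_mx 0 j) x) a.
(* <L^dual(a) x, b> = <a op b, x> *)
Definition LdAs n (op : 'cV[K]_n -> 'cV[K]_n -> 'cV[K]_n) (a : 'cV[K]_n)
    (x : 'rV[K]_n) : 'rV[K]_n :=
  \row_j pairing x (op a (delta_mx j 0)).
(* <R^dual(a) x, b> = <b op a, x> *)
Definition RdAs n (op : 'cV[K]_n -> 'cV[K]_n -> 'cV[K]_n) (a : 'cV[K]_n)
    (x : 'rV[K]_n) : 'rV[K]_n :=
  \row_j pairing x (op (delta_mx j 0) a).

End Defs.

From mathcomp Require Import all_boot all_order all_algebra ring.
Import GRing.Theory.
Set Implicit Arguments. Unset Strict Implicit. Unset Printing Implicit Defensive.
Local Open Scope ring_scope.

(* Proof structure.
   1. A matched pair of antiassociative algebras is the same as an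
      antiassociative product on the direct sum A (+) B built from the two
      products and the four actions ([sum_antiassoc_of_matched_pair],
      [matched_pair_of_sum_antiassoc]); the total of an antidendriform pair is
      antiassociative ([antidend_total_antiassoc]).
   2. "<=": the products of an antidendriform matched pair add up to the
      product of the total matched pair ([sum_op_total]), which is therefore
      antiassociative.
   3. "=>": on A (+) A* the skew form omega((x,a),(y,b)) = <x,b> - <y,a>
      turns the antidendriform axioms into rearrangements of antiassociativity
      of the total product, provided > and < are adjoint to it
      ([antidend_of_omega_adjoint]); the dual actions of the theorem give
      exactly this adjointness ([coadjoint], [omega_adjoint_sum_op]).  The
      bimodule conditions are the special case where A* is replaced by a
      zero algebra.
   General results are proved for an arbitrary nondegenerate pairing of
   matrix spaces, so that they apply both to A (+) A* and to A* (+) A; the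
   theorem uses A = 'rV_n, A* = 'cV_n with <x,a> = x *m a. *)

Section BilinearMaps.
Variable K : fieldType.

Section Linear.
Variables (U W : lmodType K) (g : U -> W).
Hypothesis hg : lin_map g.

Lemma lin_mapD u v : g (u + v) = g u + g v.
Proof. by have := hg 1 u v; rewrite !scale1r. Qed.

Lemma lin_map0 : g 0 = 0.
Proof. by apply: (@addrI _ (g 0)); rewrite -lin_mapD !addr0. Qed.

Lemma lin_mapZ c u : g (c *: u) = c *: g u.
Proof. by rewrite -[c *: u]addr0 hg lin_map0 addr0. Qed.

Lemma lin_mapN u : g (- u) = - g u.
Proof. by rewrite -scaleN1r lin_mapZ scaleN1r. Qed.
End Linear.

Section Bilinear.
Variables (U V W : lmodType K) (f : U -> V -> W).
Hypothesis hf : bilin f.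

Lemma bilinDl u1 u2 v : f (u1 + u2) v = f u1 v + f u2 v.
Proof. exact: (lin_mapD (hf.2 v)). Qed.
Lemma bilinDr u v1 v2 : f u (v1 + v2) = f u v1 + f u v2.
Proof. exact: (lin_mapD (hf.1 u)). Qed.
Lemma bilinNl u v : f (- u) v = - f u v.
Proof. exact: (lin_mapN (hf.2 v)). Qed.
Lemma bilinNr u v : f u (- v) = - f u v.
Proof. exact: (lin_mapN (hf.1 u)). Qed.
Lemma bilinZl c u v : f (c *: u) v = c *: f u v.
Proof. exact: (lin_mapZ (hf.2 v)). Qed.
Lemma bilinZr c u v : f u (c *: v) = c *: f u v.
Proof. exact: (lin_mapZ (hf.1 u)). Qed.
Lemma bilin0l v : f 0 v = 0.
Proof. exact: (lin_map0 (hf.2 v)). Qed.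
Lemma bilin0r u : f u 0 = 0.
Proof. exact: (lin_map0 (hf.1 u)). Qed.
End Bilinear.
End BilinearMaps.

Definition pw_sum (X Y : Type) (Z : zmodType) (m f g : X -> Y -> Z) :=
  forall x y, m x y = f x y + g x y.

Section Combinators.
Variables (K : fieldType) (U V W : lmodType K).

Lemma bilin_add (f g : U -> V -> W) :
  bilin f -> bilin g -> bilin (fun x y => f x y + g x y).
Proof.
move=> hf hg; split=> [x|y] c u v /=.
  by rewrite (bilinDr hf) (bilinDr hg) (bilinZr hf) (bilinZr hg) scalerDr addrACA.
by rewrite (bilinDl hf) (bilinDl hg) (bilinZl hf) (bilinZl hg) scalerDr addrACA.
Qed.

Lemma bilin_opp (f : U -> V -> W) : bilin f -> bilin (fun x y => - f x y).
Proof.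
move=> hf; split=> [x|y] c u v /=.
  by rewrite (bilinDr hf) (bilinZr hf) opprD scalerN.
by rewrite (bilinDl hf) (bilinZl hf) opprD scalerN.
Qed.

Lemma bilin0 : bilin (fun (_ : U) (_ : V) => (0 : W)).
Proof. by split=> [x|y] c u v; rewrite scaler0 addr0. Qed.

Lemma bilin_pw_sum (m f g : U -> V -> W) :
  pw_sum m f g -> bilin f -> bilin g -> bilin m.
Proof.
move=> mfg hf hg; have [hx hy] := bilin_add hf hg.
by split=> [x|y] c u v; rewrite !mfg; [apply: hx | apply: hy].
Qed.
End Combinators.

(* The total product x * y = x > y + x < y of an antidendriform algebra is
   antiassociative: add up the three antidendriform axioms. *)
Lemma antidend_total_antiassoc (K : fieldType) (V : lmodType K)
    (s p m : V -> V -> V) :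
  antidend s p -> pw_sum m s p -> antiassoc m.
Proof.
case=> hs [hp ax] msp; split=> [|x y z]; first exact: bilin_pw_sum msp hs hp.
have [ppx spx ssx] := ax x y z.
rewrite (bilinDr hp) in ppx; rewrite (bilinDl hs) in ssx.
rewrite !msp (bilinDl hs) (bilinDl hp) (bilinDr hs) (bilinDr hp) ppx spx ssx.
by rewrite !opprD !opprK !addrA.
Qed.

(* Additive identities between matrices are checked entrywise by [ring]; this
   is why the general results below are stated for matrix spaces. *)
Ltac mx_ring := apply/matrixP=> ? ?; rewrite !mxE; ring.

(* Closes a goal [lhs = rhs] between matrices from a hypothesis [E] whose
   entrywise defect is, up to sign, that of the goal. *)
Ltac solve_by_defect E :=
  let i := fresh "i" in let j := fresh "j" in let Eij := fresh "Eij" in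
  apply/matrixP => i j;
  have Eij := congr1 (fun M => @fun_of_matrix _ _ _ M i j) E;
  rewrite /= ?mxE in Eij *;
  lazymatch type of Eij with ?e1 = ?e2 =>
    apply/eqP; rewrite -subr_eq0; apply/eqP;
    first [ transitivity (e1 - e2); [ring | by rewrite Eij subrr]
          | transitivity (- (e1 - e2)); [ring | by rewrite Eij subrr oppr0] ]
  end.

(* Simplifies a component identity [E] of an antiassociativity identity on a
   sum, where [zeros] kills the products with a zero argument, then closes the
   goal from it. *)
Ltac component_defect zeros E :=
  do 3 rewrite /sum_op /= ?zeros ?addr0 ?add0r ?oppr0 in E; solve_by_defect E.

Section MatchedPairOfAntiassociative.
Variables (K : fieldType) (m1 m2 m3 m4 : nat).
Local Notation A := 'M[K]_(m1, m2).
Local Notation B := 'M[K]_(m3, m4).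
Variables (mA : A -> A -> A) (mB : B -> B -> B).
Variables (lA rA : A -> B -> B) (lB rB : B -> A -> A).
Local Notation mul := (sum_op mA mB lA rA lB rB).

Lemma bilin_sum_op : bilin mA -> bilin mB -> bilin lA -> bilin rA ->
  bilin lB -> bilin rB -> bilin mul.
Proof.
move=> hmA hmB hlA hrA hlB hrB.
have linear := (bilinDl hmA, bilinDr hmA, bilinZl hmA, bilinZr hmA,
  bilinDl hmB, bilinDr hmB, bilinZl hmB, bilinZr hmB,
  (bilinDl hlA, bilinDr hlA, bilinZl hlA, bilinZr hlA,
   bilinDl hrA, bilinDr hrA, bilinZl hrA, bilinZr hrA),
  (bilinDl hlB, bilinDr hlB, bilinZl hlB, bilinZr hlB,
   bilinDl hrB, bilinDr hrB, bilinZl hrB, bilinZr hrB)).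
by split=> [[x a]|[y b]] c [x1 a1] [x2 a2]; rewrite /sum_op /=;
  congr pair; rewrite !linear; mx_ring.
Qed.

Lemma sum_antiassoc_of_matched_pair :
  antiassoc mA -> antiassoc mB -> aa_matched_pair mA mB lA rA lB rB ->
  forall u v w, mul (mul u v) w = - mul u (mul v w).
Proof.
move=> [hmA assocA] [hmB assocB] [[hlA [hrA bimA]] [[hlB [hrB bimB]] compat]].
have lA_mul x y v : lA (mA x y) v = - lA x (lA y v) by case: (bimA x y v).
have rA_mul x y v : rA (mA x y) v = - rA y (rA x v) by case: (bimA x y v).
have lA_rA x y v : lA x (rA y v) = - rA y (lA x v) by case: (bimA x y v).
have lB_mul a b x : lB (mB a b) x = - lB a (lB b x) by case: (bimB a b x).
have rB_mul a b x : rB (mB a b) x = - rB b (rB a x) by case: (bimB a b x).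
have lB_rB a b x : lB a (rB b x) = - rB b (lB a x) by case: (bimB a b x).
have lA_mB x a b : lA x (mB a b) = - lA (rB a x) b - mB (lA x a) b.
  by case: (compat x x a b) => [[]].
have rA_mB x a b : rA x (mB a b) = - rA (lB b x) a - mB a (rA x b).
  by case: (compat x x a b) => [[]].
have lB_mA a x y : lB a (mA x y) = - lB (rA x a) y - mA (lB a x) y.
  by case: (compat x y a a) => [[]].
have rB_mA a x y : rB a (mA x y) = - rB (lA y a) x - mA x (rB a y).
  by case: (compat x y a a) => [[]].
have lA_lB x a b :
    lA (lB a x) b = - (mB (rA x a) b + (rA (rB b x) a + mB a (lA x b))).
  by case: (compat x x a b) => _ [/eqP + _]; rewrite -!addrA addr_eq0 => /eqP.
have lB_lA a x y :
    lB (lA x a) y = - (mA (rB a x) y + (rB (rA y a) x + mA x (lB a y))).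
  by case: (compat x y a a) => _ [_ /eqP]; rewrite -!addrA addr_eq0 => /eqP.
have additive := (bilinDl hmA, bilinDr hmA, bilinNl hmA, bilinNr hmA,
  bilinDl hmB, bilinDr hmB, bilinNl hmB, bilinNr hmB,
  (bilinDl hlA, bilinDr hlA, bilinNl hlA, bilinNr hlA,
   bilinDl hrA, bilinDr hrA, bilinNl hrA, bilinNr hrA),
  (bilinDl hlB, bilinDr hlB, bilinNl hlB, bilinNr hlB,
   bilinDl hrB, bilinDr hrB, bilinNl hrB, bilinNr hrB)).
move=> [x a] [y b] [z c]; rewrite /sum_op /= !additive; congr pair.
  by rewrite assocA rB_mul lB_mul rB_mA lB_mA lB_lA lB_rB ?additive; mx_ring.
by rewrite assocB lA_mul rA_mul lA_mB rA_mB lA_lB lA_rA ?additive; mx_ring.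
Qed.
(* Conversely, if the product on A (+) B is antiassociative then every
   matched-pair identity is one component of the antiassociativity identity
   evaluated at a triple of elements of A or of B. *)
Lemma matched_pair_of_sum_antiassoc :
  bilin mA -> bilin mB -> bilin lA -> bilin rA -> bilin lB -> bilin rB ->
  (forall u v w, mul (mul u v) w = - mul u (mul v w)) ->
  aa_matched_pair mA mB lA rA lB rB.
Proof.
move=> hmA hmB hlA hrA hlB hrB assoc.
have zeros := (bilin0l hmA, bilin0r hmA, bilin0l hmB, bilin0r hmB,
  (bilin0l hlA, bilin0r hlA, bilin0l hrA, bilin0r hrA),
  (bilin0l hlB, bilin0r hlB, bilin0l hrB, bilin0r hrB)).
have component u v w (X : Type) (proj : A * B -> X) :
    proj (mul (mul u v) w) = proj (- mul u (mul v w)) by rewrite assoc.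
split; [do 2 split=> //; move=> x y c; split|].
- have E := component (x, 0) (y, 0) (0, c) _ snd; component_defect zeros E.
- have E := component (0, c) (x, 0) (y, 0) _ snd; component_defect zeros E.
- have E := component (x, 0) (0, c) (y, 0) _ snd; component_defect zeros E.
split; [do 2 split=> //; move=> a b x; split|].
- have E := component (0, a) (0, b) (x, 0) _ fst; component_defect zeros E.
- have E := component (x, 0) (0, a) (0, b) _ fst; component_defect zeros E.
- have E := component (0, a) (x, 0) (0, b) _ fst; component_defect zeros E.
move=> x y a b; split; [split|split].
- have E := component (x, 0) (0, a) (0, b) _ snd; component_defect zeros E.
- have E := component (0, a) (0, b) (x, 0) _ snd; component_defect zeros E.
- have E := component (0, a) (x, 0) (y, 0) _ fst; component_defect zeros E.
- have E := component (x, 0) (y, 0) (0, a) _ fst; component_defect zeros E.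
- have E := component (0, a) (x, 0) (0, b) _ snd; component_defect zeros E.
- have E := component (x, 0) (0, a) (y, 0) _ fst; component_defect zeros E.
Qed.
End MatchedPairOfAntiassociative.

Definition nondegenerate_pairing (K : fieldType) (A B : zmodType)
    (pr : A -> B -> K) :=
  [/\ forall x1 x2 b, pr (x1 + x2) b = pr x1 b + pr x2 b,
      forall x b1 b2, pr x (b1 + b2) = pr x b1 + pr x b2,
      forall x1 x2, (forall b, pr x1 b = pr x2 b) -> x1 = x2 &
      forall b1 b2, (forall x, pr x b1 = pr x b2) -> b1 = b2].

Lemma nondegenerate_flip (K : fieldType) (A B : zmodType) (pr : A -> B -> K) :
  nondegenerate_pairing pr -> nondegenerate_pairing (fun b x => pr x b).
Proof. by case=> *; split. Qed.

(* Four actions (ls, rs, lp, rp) of an antidendriform algebra (A, s, p) on B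
   are coadjoint with respect to [pr] when, writing <,> for [pr],
   <z, ls x b> = <z*x, b>, <z, rs y a> = -<y p z, a>, <z, lp x b> = -<z s x, b>
   and <z, rp y a> = <y*z, a>, where * = s + p: these are the actions
   R*_s + R*_p, -L*_p, -R*_s, L*_s + L*_p of the theorem. *)
Definition coadjoint (K : fieldType) (A B : zmodType) (pr : A -> B -> K)
    (s p : A -> A -> A) (ls rs lp rp : A -> B -> B) :=
  [/\ forall z x b, pr z (ls x b) = pr (s z x) b + pr (p z x) b,
      forall z y a, pr z (rs y a) = - pr (p y z) a,
      forall z x b, pr z (lp x b) = - pr (s z x) b &
      forall z y a, pr z (rp y a) = pr (s y z) a + pr (p y z) a].

Section NondegeneratePairing.
Variables (K : fieldType) (A B : lmodType K) (pr : A -> B -> K).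
Hypothesis hpr : nondegenerate_pairing pr.

Lemma pairing0l b : pr 0 b = 0.
Proof.
case: hpr => prDl _ _ _; apply: (@addrI _ (pr 0 b)).
by rewrite -prDl !addr0.
Qed.

Lemma pairing0r x : pr x 0 = 0.
Proof.
case: hpr => _ prDr _ _; apply: (@addrI _ (pr x 0)).
by rewrite -prDr !addr0.
Qed.

Lemma pairingNl x b : pr (- x) b = - pr x b.
Proof.
case: hpr => prDl _ _ _; apply: (@addrI _ (pr x b)).
by rewrite -prDl !subrr pairing0l.
Qed.

Lemma pairingNr x b : pr x (- b) = - pr x b.
Proof.
case: hpr => _ prDr _ _; apply: (@addrI _ (pr x b)).
by rewrite -prDr !subrr pairing0r.
Qed.

Lemma coadjoint0 : coadjoint pr (fun _ _ => 0) (fun _ _ => 0)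
  (fun _ _ => 0) (fun _ _ => 0) (fun _ _ => 0) (fun _ _ => 0).
Proof. by split=> *; rewrite pairing0l pairing0r ?addr0 ?oppr0. Qed.

Definition omega (u v : A * B) : K := pr u.1 v.2 - pr v.1 u.2.

Lemma omega_inj u v : (forall w, omega u w = omega v w) -> u = v.
Proof.
case: hpr => _ _ injl injr; case: u v => [x a] [y b] uv; congr pair.
  by apply: injl => c; have := uv (0, c); rewrite /omega /= !pairing0l !subr0.
apply: injr => z; have := uv (z, 0); rewrite /omega /= !pairing0r !sub0r.
exact: oppr_inj.
Qed.

Lemma omegaNl u w : omega (- u) w = - omega u w.
Proof. by rewrite /omega /= pairingNl pairingNr opprD opprK. Qed.

Lemma omegaNr u w : omega u (- w) = - omega u w.
Proof. by rewrite /omega /= pairingNl pairingNr opprD opprK. Qed.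

Section OmegaAdjoint.
Variables (S P : A * B -> A * B -> A * B).
Local Notation total u v := (S u v + P u v).

(* If the total product * = S + P is antiassociative and, with respect to
   omega, P u v = u * v and S u v = v * u in the sense that
   omega(P u v, w) = omega(u, v * w) and omega(S u v, w) = omega(v, w * u),
   then (S, P) is antidendriform: each axiom becomes, after moving all
   products to the right of omega, an instance of antiassociativity. *)
Lemma antidend_of_omega_adjoint : bilin S -> bilin P ->
  (forall u v w, total (total u v) w = - total u (total v w)) ->
  (forall u v w, omega (S u v) w = omega v (total w u)) ->
  (forall u v w, omega (P u v) w = omega u (total v w)) ->
  antidend S P.
Proof.
move=> hS hP assoc adjS adjP; do 2 split=> //.
move=> u v w; split; apply: omega_inj => t; rewrite omegaNl.
- by rewrite !adjP assoc omegaNr opprK.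
- by rewrite adjP adjS adjS adjP assoc omegaNr.
- by rewrite adjS adjS adjS assoc omegaNr.
Qed.
End OmegaAdjoint.

Lemma omega_adjoint_sum_op (sA pA : A -> A -> A) (sB pB : B -> B -> B)
    (lsA rsA lpA rpA : A -> B -> B) (lsB rsB lpB rpB : B -> A -> A) :
    coadjoint pr sA pA lsA rsA lpA rpA ->
    coadjoint (fun b x => pr x b) sB pB lsB rsB lpB rpB ->
  let S := sum_op sA sB lsA rsA lsB rsB in
  let P := sum_op pA pB lpA rpA lpB rpB in
  (forall u v w, omega (S u v) w = omega v (S w u + P w u)) /\
  (forall u v w, omega (P u v) w = omega u (S v w + P v w)).
Proof.
case: hpr => prDl prDr _ _ [lsAE rsAE lpAE rpAE] [lsBE rsBE lpBE rpBE] /=.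
split=> [[x a] [y b] [z c]|[x a] [y b] [z c]];
  rewrite /omega /sum_op /= !prDl !prDr ?lsAE ?rsAE ?lpAE ?rpAE
    ?lsBE ?rsBE ?lpBE ?rpBE; ring.
Qed.
End NondegeneratePairing.

Definition bilin_actions (K : fieldType) (A B : lmodType K)
    (ls rs lp rp : A -> B -> B) :=
  [/\ bilin ls, bilin rs, bilin lp & bilin rp].

Lemma pw_sum0 (X Y : Type) (Z : zmodType) :
  pw_sum (fun (_ : X) (_ : Y) => 0 : Z) (fun _ _ => 0) (fun _ _ => 0).
Proof. by move=> x y; rewrite addr0. Qed.

Section ZeroAlgebra.
Variables (K : fieldType) (A B : lmodType K).

Lemma antidend0 : antidend (fun _ _ : B => 0) (fun _ _ => 0).
Proof.
split; first exact: bilin0; split; first exact: bilin0.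
by move=> *; split; rewrite oppr0.
Qed.

Lemma bilin_actions0 : bilin_actions (fun (_ : A) (_ : B) => 0)
  (fun _ _ => 0) (fun _ _ => 0) (fun _ _ => 0).
Proof. by split; exact: bilin0. Qed.

Lemma aa_matched_pair_of_bimodule (mA : A -> A -> A) (lA rA : A -> B -> B) :
  bilin mA -> aa_bimodule mA lA rA ->
  aa_matched_pair mA (fun _ _ : B => 0) lA rA (fun _ _ => 0) (fun _ _ => 0).
Proof.
move=> hmA bim; have [hlA [hrA _]] := bim; split=> //; split.
  split; first exact: bilin0; split; first exact: bilin0.
  by move=> *; split; rewrite oppr0.
move=> x y a b; rewrite ?(bilin0l hmA, bilin0r hmA, bilin0l hlA, bilin0r hlA,
  bilin0l hrA, bilin0r hrA).
by split; [split|split]; rewrite ?oppr0 ?subr0 ?addr0.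
Qed.
End ZeroAlgebra.

Section AntidendriformSum.
Variables (K : fieldType) (m1 m2 m3 m4 : nat).
Local Notation A := 'M[K]_(m1, m2).
Local Notation B := 'M[K]_(m3, m4).
Variables (sA pA mA : A -> A -> A) (sB pB mB : B -> B -> B).
Variables (lsA rsA lpA rpA lA rA : A -> B -> B).
Variables (lsB rsB lpB rpB lB rB : B -> A -> A).
Hypotheses (emA : pw_sum mA sA pA) (emB : pw_sum mB sB pB).
Hypotheses (elA : pw_sum lA lsA lpA) (erA : pw_sum rA rsA rpA).
Hypotheses (elB : pw_sum lB lsB lpB) (erB : pw_sum rB rsB rpB).

Lemma sum_op_total : pw_sum (sum_op mA mB lA rA lB rB)
  (sum_op sA sB lsA rsA lsB rsB) (sum_op pA pB lpA rpA lpB rpB).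
Proof.
by move=> [x a] [y b]; rewrite /sum_op /= emA emB elA erA elB erB; congr pair;
  mx_ring.
Qed.

Lemma antidend_sum_of_matched_pair (pr : A -> B -> K) :
  nondegenerate_pairing pr -> antidend sA pA -> antidend sB pB ->
  bilin_actions lsA rsA lpA rpA -> bilin_actions lsB rsB lpB rpB ->
  coadjoint pr sA pA lsA rsA lpA rpA ->
  coadjoint (fun b x => pr x b) sB pB lsB rsB lpB rpB ->
  aa_matched_pair mA mB lA rA lB rB ->
  antidend (sum_op sA sB lsA rsA lsB rsB) (sum_op pA pB lpA rpA lpB rpB).
Proof.
move=> hpr adA adB [hlsA hrsA hlpA hrpA] [hlsB hrsB hlpB hrpB] coA coB mp.
have [hsA [hpA _]] := adA; have [hsB [hpB _]] := adB.
have [adjS adjP] := omega_adjoint_sum_op hpr coA coB.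
apply: (antidend_of_omega_adjoint hpr) adjS adjP.
- exact: bilin_sum_op.
- exact: bilin_sum_op.
move=> u v w; rewrite -!sum_op_total.
apply: (sum_antiassoc_of_matched_pair _ _ mp).
- exact: antidend_total_antiassoc adA emA.
- exact: antidend_total_antiassoc adB emB.
Qed.

(* Converse: the totals of a matched pair of antidendriform algebras form a
   matched pair of antiassociative algebras, because the total of an
   antidendriform product on A (+) B is antiassociative. *)
Lemma aa_matched_pair_of_ad_matched_pair :
  antidend sA pA -> antidend sB pB ->
  ad_matched_pair sA pA sB pB lsA rsA lpA rpA lsB rsB lpB rpB ->
  aa_matched_pair mA mB lA rA lB rB.
Proof.
move=> [hsA [hpA _]] [hsB [hpB _]].
case=> [[hlsA hrsA hlpA hrpA _] [hlsB hrsB hlpB hrpB _] adAB].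
apply: matched_pair_of_sum_antiassoc; try exact: bilin_pw_sum.
by case: (antidend_total_antiassoc adAB sum_op_total).
Qed.
End AntidendriformSum.

(* An antidendriform bimodule from an antiassociative one, with coadjoint
   actions: the case of [antidend_sum_of_matched_pair] where B is a zero
   algebra. *)
Lemma ad_bimodule_of_aa_bimodule (K : fieldType) (m1 m2 m3 m4 : nat)
    (pr : 'M[K]_(m1, m2) -> 'M[K]_(m3, m4) -> K)
    (sA pA mA : 'M_(m1, m2) -> 'M_(m1, m2) -> 'M_(m1, m2))
    (ls rs lp rp lA rA : 'M_(m1, m2) -> 'M_(m3, m4) -> 'M_(m3, m4)) :
  nondegenerate_pairing pr -> antidend sA pA -> bilin_actions ls rs lp rp ->
  coadjoint pr sA pA ls rs lp rp -> pw_sum mA sA pA -> pw_sum lA ls lp ->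
  pw_sum rA rs rp -> aa_bimodule mA lA rA -> ad_bimodule sA pA ls rs lp rp.
Proof.
move=> hpr adA bil co emA elA erA bim; have [? ? ? ?] := bil; split=> //.
have pw0 := @pw_sum0 'M[K]_(m3, m4).
apply: (antidend_sum_of_matched_pair emA (pw0 _ _) elA erA (pw0 _ _) (pw0 _ _)
  hpr adA (antidend0 _) bil (bilin_actions0 _ _) co
  (coadjoint0 (nondegenerate_flip hpr))).
have [hsA [hpA _]] := adA.
exact: aa_matched_pair_of_bimodule (bilin_pw_sum emA hsA hpA) bim.
Qed.

Section DualPairing.
Variables (K : fieldType) (n : nat).
Local Notation V := 'rV[K]_n.
Local Notation W := 'cV[K]_n.

Lemma pairingDl (x1 x2 : V) (a : W) :
  pairing (x1 + x2) a = pairing x1 a + pairing x2 a.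
Proof. by rewrite /pairing mulmxDl mxE. Qed.

Lemma pairingDr (x : V) (a1 a2 : W) :
  pairing x (a1 + a2) = pairing x a1 + pairing x a2.
Proof. by rewrite /pairing mulmxDr mxE. Qed.

Lemma pairingZl c (x : V) (a : W) : pairing (c *: x) a = c * pairing x a.
Proof. by rewrite /pairing -scalemxAl mxE. Qed.

Lemma pairingZr c (x : V) (a : W) : pairing x (c *: a) = c * pairing x a.
Proof. by rewrite /pairing -scalemxAr mxE. Qed.

Lemma pairing_nondegenerate : nondegenerate_pairing (@pairing K n).
Proof.
split; [exact: pairingDl | exact: pairingDr | |].
  move=> x1 x2 x12; apply/rowP => j; have := x12 (delta_mx j 0).
  by rewrite /pairing -!colE !mxE.
move=> a1 a2 a12; apply/colP => j; have := a12 (delta_mx 0 j).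
by rewrite /pairing -!rowE !mxE.
Qed.

Lemma row_expand (g : V -> K) :
    (forall u v, g (u + v) = g u + g v) -> (forall c u, g (c *: u) = c * g u) ->
  forall y, g y = \sum_j y 0 j * g (delta_mx 0 j).
Proof.
move=> gD gZ y; rewrite {1}(row_sum_delta y).
have g0 : g 0 = 0 by apply: (@addrI _ (g 0)); rewrite -gD !addr0.
by rewrite (big_morph g gD g0); apply: eq_bigr => j _; rewrite gZ.
Qed.

Lemma col_expand (g : W -> K) :
    (forall u v, g (u + v) = g u + g v) -> (forall c u, g (c *: u) = c * g u) ->
  forall b, g b = \sum_j b j 0 * g (delta_mx j 0).
Proof.
move=> gD gZ b; have := @row_expand (fun y => g y^T) _ _ b^T.
rewrite trmxK => ->; first by apply: eq_bigr => j _; rewrite mxE trmx_delta.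
- by move=> u v; rewrite linearD gD.
- by move=> c u; rewrite linearZ gZ.
Qed.

Lemma pairing_sum (y : V) (b : W) : pairing y b = \sum_j y 0 j * b j 0.
Proof. by rewrite /pairing mxE. Qed.

Section DualMaps.
Variables (op : V -> V -> V) (opB : W -> W -> W).
Hypotheses (hop : bilin op) (hopB : bilin opB).

Lemma pairing_LdA y x a : pairing y (LdA op x a) = pairing (op x y) a.
Proof.
rewrite pairing_sum (@row_expand (fun y => pairing (op x y) a)).
- by apply: eq_bigr => j _; rewrite mxE.
- by move=> u v; rewrite (bilinDr hop) pairingDl.
- by move=> c u; rewrite (bilinZr hop) pairingZl.
Qed.

Lemma pairing_RdA y x a : pairing y (RdA op x a) = pairing (op y x) a.
Proof.
rewrite pairing_sum (@row_expand (fun y => pairing (op y x) a)).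
- by apply: eq_bigr => j _; rewrite mxE.
- by move=> u v; rewrite (bilinDl hop) pairingDl.
- by move=> c u; rewrite (bilinZl hop) pairingZl.
Qed.

Lemma pairing_LdAs a x b : pairing (LdAs opB a x) b = pairing x (opB a b).
Proof.
rewrite pairing_sum (@col_expand (fun b => pairing x (opB a b))).
- by apply: eq_bigr => j _; rewrite mxE mulrC.
- by move=> u v; rewrite (bilinDr hopB) pairingDr.
- by move=> c u; rewrite (bilinZr hopB) pairingZr.
Qed.

Lemma pairing_RdAs a x b : pairing (RdAs opB a x) b = pairing x (opB b a).
Proof.
rewrite pairing_sum (@col_expand (fun b => pairing x (opB b a))).
- by apply: eq_bigr => j _; rewrite mxE mulrC.
- by move=> u v; rewrite (bilinDl hopB) pairingDr.
- by move=> c u; rewrite (bilinZl hopB) pairingZr.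
Qed.

(* Dual maps of bilinear products are bilinear: test against the pairing. *)
Lemma bilin_LdA : bilin (LdA op).
Proof.
have [_ _ _ inj] := pairing_nondegenerate.
split=> [x|y] c u v; apply: inj => z; rewrite pairingDr pairingZr !pairing_LdA.
  by rewrite pairingDr pairingZr.
by rewrite (bilinDl hop) (bilinZl hop) pairingDl pairingZl.
Qed.

Lemma bilin_RdA : bilin (RdA op).
Proof.
have [_ _ _ inj] := pairing_nondegenerate.
split=> [x|y] c u v; apply: inj => z; rewrite pairingDr pairingZr !pairing_RdA.
  by rewrite pairingDr pairingZr.
by rewrite (bilinDr hop) (bilinZr hop) pairingDl pairingZl.
Qed.

Lemma bilin_LdAs : bilin (LdAs opB).
Proof.
have [_ _ inj _] := pairing_nondegenerate.
split=> [x|y] c u v; apply: inj => z; rewrite pairingDl pairingZl !pairing_LdAs.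
  by rewrite pairingDl pairingZl.
by rewrite (bilinDl hopB) (bilinZl hopB) pairingDr pairingZr.
Qed.

Lemma bilin_RdAs : bilin (RdAs opB).
Proof.
have [_ _ inj _] := pairing_nondegenerate.
split=> [x|y] c u v; apply: inj => z; rewrite pairingDl pairingZl !pairing_RdAs.
  by rewrite pairingDl pairingZl.
by rewrite (bilinDr hopB) (bilinZr hopB) pairingDr pairingZr.
Qed.
End DualMaps.

Section DualActions.
Variables (sA pA : V -> V -> V) (sB pB : W -> W -> W).
Hypotheses (hsA : bilin sA) (hpA : bilin pA) (hsB : bilin sB) (hpB : bilin pB).

Lemma dual_actions_bilin_rV : bilin_actions
  (fun x a => RdA sA x a + RdA pA x a) (fun x a => - LdA pA x a)
  (fun x a => - RdA sA x a) (fun x a => LdA sA x a + LdA pA x a).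
Proof.
split.
- exact: bilin_add (bilin_RdA hsA) (bilin_RdA hpA).
- exact: bilin_opp (bilin_LdA hpA).
- exact: bilin_opp (bilin_RdA hsA).
- exact: bilin_add (bilin_LdA hsA) (bilin_LdA hpA).
Qed.

Lemma dual_actions_bilin_cV : bilin_actions
  (fun a x => RdAs sB a x + RdAs pB a x) (fun a x => - LdAs pB a x)
  (fun a x => - RdAs sB a x) (fun a x => LdAs sB a x + LdAs pB a x).
Proof.
split.
- exact: bilin_add (bilin_RdAs hsB) (bilin_RdAs hpB).
- exact: bilin_opp (bilin_LdAs hpB).
- exact: bilin_opp (bilin_RdAs hsB).
- exact: bilin_add (bilin_LdAs hsB) (bilin_LdAs hpB).
Qed.

Lemma dual_actions_coadjoint_rV : coadjoint (@pairing K n) sA pA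
  (fun x a => RdA sA x a + RdA pA x a) (fun x a => - LdA pA x a)
  (fun x a => - RdA sA x a) (fun x a => LdA sA x a + LdA pA x a).
Proof.
have hpr := pairing_nondegenerate.
by split=> *; rewrite ?pairingDr ?(pairingNr hpr) ?pairing_RdA ?pairing_LdA.
Qed.

Lemma dual_actions_coadjoint_cV : coadjoint (fun a x => @pairing K n x a) sB pB
  (fun a x => RdAs sB a x + RdAs pB a x) (fun a x => - LdAs pB a x)
  (fun a x => - RdAs sB a x) (fun a x => LdAs sB a x + LdAs pB a x).
Proof.
have hpr := pairing_nondegenerate.
by split=> *; rewrite ?pairingDl ?(pairingNl hpr) ?pairing_RdAs ?pairing_LdAs.
Qed.

Lemma dual_actions_total :
  [/\ pw_sum (RdA pA) (fun x a => RdA sA x a + RdA pA x a)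
        (fun x a => - RdA sA x a),
      pw_sum (LdA sA) (fun x a => - LdA pA x a)
        (fun x a => LdA sA x a + LdA pA x a),
      pw_sum (RdAs pB) (fun a x => RdAs sB a x + RdAs pB a x)
        (fun a x => - RdAs sB a x) &
      pw_sum (LdAs sB) (fun a x => - LdAs pB a x)
        (fun a x => LdAs sB a x + LdAs pB a x)].
Proof.
by split=> u v; [rewrite [RHS]addrC addKr | rewrite addrC addrK
               | rewrite [RHS]addrC addKr | rewrite addrC addrK].
Qed.
End DualActions.
End DualPairing.

Theorem theorem4p1p7 (K : fieldType) (n : nat)
    (sA pA : 'rV[K]_n -> 'rV[K]_n -> 'rV[K]_n)
    (sB pB : 'cV[K]_n -> 'cV[K]_n -> 'cV[K]_n) :
  antidend sA pA -> antidend sB pB ->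
  (aa_matched_pair (dstar sA pA) (dstar sB pB)
     (RdA pA) (LdA sA) (RdAs pB) (LdAs sB)
   <->
   ad_matched_pair sA pA sB pB
     (fun x a => RdA sA x a + RdA pA x a) (fun x a => - LdA pA x a)
     (fun x a => - RdA sA x a) (fun x a => LdA sA x a + LdA pA x a)
     (fun a x => RdAs sB a x + RdAs pB a x) (fun a x => - LdAs pB a x)
     (fun a x => - RdAs sB a x) (fun a x => LdAs sB a x + LdAs pB a x)).
Proof.
move=> adA adB; have [hsA [hpA _]] := adA; have [hsB [hpB _]] := adB.
have hpr := @pairing_nondegenerate K n.
have emA : pw_sum (dstar sA pA) sA pA by move=> x y; exact: addrC.
have emB : pw_sum (dstar sB pB) sB pB by move=> a b; exact: addrC.
have [elA erA elB erB] := dual_actions_total sA pA sB pB.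
have bilA := dual_actions_bilin_rV hsA hpA.
have bilB := dual_actions_bilin_cV hsB hpB.
have coA := dual_actions_coadjoint_rV hsA hpA.
have coB := dual_actions_coadjoint_cV hsB hpB.
split=> [mp | adAB]; last first.
  exact: (aa_matched_pair_of_ad_matched_pair emA emB elA erA elB erB adA adB
    adAB).
split.
- exact: ad_bimodule_of_aa_bimodule hpr adA bilA coA emA elA erA mp.1.
- exact: ad_bimodule_of_aa_bimodule (nondegenerate_flip hpr) adB bilB coB
    emB elB erB mp.2.1.
- exact: (antidend_sum_of_matched_pair emA emB elA erA elB erB hpr adA adB
    bilA bilB coA coB mp).
Qed.
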